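(* Let $n\ge 2$, $a,b,c\in\mathbb{Z}_n$ and $P(x,y)=a+bx+cy$. Then $(\mathbb{Z}_n,* )$ with $x*y=P(x,y)$ is a quasigroup satisfying the Abel-Grassman law if and only if $c^2\equiv b\pmod n$ and $\gcd(b,n)=\gcd(c,n)=1$.
   Context: $\mathbb{Z}_n$ is the ring of integers modulo $n$. A groupoid $(G,\cdot)$ is a quasigroup if for all $u,v\in G$ the equations $u\cdot x=v$ and $y\cdot u=v$ have unique solutions. The Abel-Grassman law is $x\cdot(y\cdot z)=z\cdot(y\cdot x)$ for all $x,y,z$. *)

From HB Require Import structures.
From mathcomp Require Import all_boot all_order all_algebra.
Set Implicit Arguments. Unset Strict Implicit. Unset Printing Implicit Defensive.
Import GRing.Theory.
Local Open Scope ring_scope.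

Definition is_quasigroup (G : Type) (op : G -> G -> G) : Prop :=
  forall u v : G,
    (exists! x : G, op u x = v) /\ (exists! y : G, op y u = v).

Definition abel_grassman (G : Type) (op : G -> G -> G) : Prop :=
  forall x y z : G, op x (op y z) = op z (op y x).

Definition linop (n : nat) (a b c : 'Z_n) : 'Z_n -> 'Z_n -> 'Z_n :=
  fun x y => a + b * x + c * y.

(* The Abel-Grassman law for x*y = a + b x + c y is equivalent to c^2 = b, since
   x*(y*z) - z*(y*x) = (b - c^2)(x - z).  The translations x |-> u*x and y |-> y*u
   are affine with slopes c and b, so they are bijective exactly when c and b are
   units; in Z_n this means gcd(c, n) = gcd(b, n) = 1. *)
From HB Require Import structures.
From mathcomp Require Import all_boot all_order all_algebra.
From mathcomp Require Import ring.
Import GRing.Theory.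
Local Open Scope ring_scope.

Definition affine_op {R : pzRingType} (a b c : R) (x y : R) : R := a + b * x + c * y.

Lemma unique_solution_mulr {R : comUnitRingType} {c : R} (w : R) :
  c \is a GRing.unit -> exists! x : R, c * x = w.
Proof. by move=> uc; exists (c^-1 * w); split=> [|x <-]; rewrite ?mulKr ?mulVKr. Qed.

Section AffineOperation.

Variables (R : comUnitRingType) (a b c : R).
Local Notation op := (affine_op a b c).

Lemma affine_op_abel_grassman_defect x y z :
  op x (op y z) - op z (op y x) = (b - c * c) * (x - z).
Proof. rewrite /affine_op; ring. Qed.

Lemma abel_grassman_affineP : abel_grassman op <-> c * c = b.
Proof.
split=> [AG | cc_b x y z].
  have := affine_op_abel_grassman_defect 1 0 0.
  by rewrite AG subrr subr0 mulr1 => /esym/eqP; rewrite subr_eq0 => /eqP.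
by apply/eqP; rewrite -subr_eq0 affine_op_abel_grassman_defect cc_b subrr mul0r.
Qed.

Lemma affine_op_eqr u x v : (op u x = v) <-> (c * x = v - a - b * u).
Proof. by rewrite /affine_op; split=> [<- | ->]; ring. Qed.

Lemma affine_op_eql y u v : (op y u = v) <-> (b * y = v - a - c * u).
Proof. by rewrite /affine_op; split=> [<- | ->]; ring. Qed.

Lemma quasigroup_affineP :
  is_quasigroup op <-> b \is a GRing.unit /\ c \is a GRing.unit.
Proof.
split=> [Q | [ub uc] u v].
  (* Solving 0*x = a+1 and y*0 = a+1 yields right inverses of c and b. *)
  have [[x [opx _]] [y [opy _]]] := Q 0 (a + 1).
  move: opx opy; rewrite affine_op_eqr affine_op_eql !mulr0 !subr0 addrC addKr.
  by move=> cx1 by1; split; apply/unitrPr; [exists y | exists x].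
have [x0 [cx0 x0_uniq]] := unique_solution_mulr (v - a - b * u) uc.
have [y0 [by0 y0_uniq]] := unique_solution_mulr (v - a - c * u) ub.
split; [exists x0 | exists y0]; split.
- exact/affine_op_eqr.
- by move=> x /affine_op_eqr; apply: x0_uniq.
- exact/affine_op_eql.
- by move=> y /affine_op_eql; apply: y0_uniq.
Qed.

End AffineOperation.

Lemma unit_Zp_gcd (n : nat) (x : 'Z_n) :
  (1 < n)%N -> (x \is a GRing.unit) = (gcdn (val x) n == 1%N).
Proof. by move=> hn; rewrite -[x]natr_Zp unitZpE // natr_Zp gcdnC. Qed.

Theorem mainTheorem10 (n : nat) (hn : (1 < n)%N) (a b c : 'Z_n) :
  (is_quasigroup (linop a b c) /\ abel_grassman (linop a b c)) <->
  (c * c = b /\ gcdn (val b) n = 1%N /\ gcdn (val c) n = 1%N).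
Proof.
have -> : linop a b c = affine_op a b c by [].
rewrite quasigroup_affineP abel_grassman_affineP !unit_Zp_gcd //.
by split=> [[[/eqP ub /eqP uc] cc_b] | [cc_b [ub uc]]]; rewrite ?ub ?uc.
Qed.
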